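(* Let $\mathsf{L}$ be a normal modal logic admitting finite chains, and let $t(x,y,z) = \Box(y\vee\Box(z\vee x))\vee x$. Then for every $n\in\mathbb{N}$, $\mathcal{V}_\mathsf{L}\not\models t^n(x,y,z)\approx t^{n+1}(x,y,z)$.
   Context: $\mathcal{V}_\mathsf{L}$ denotes the variety of modal algebras corresponding to $\mathsf{L}$. Iterates in the first argument: $t^0(x,y,z):=x$, $t^{k+1}(x,y,z) := t(t^k(x,y,z),y,z)$. A finite chain is a Kripke frame $(C,R)$ with $C$ finite such that the reflexive closure of $R$ is a total order on $C$ (so an $n$-element chain is determined by a total order together with a choice of which points are reflexive). $\mathsf{L}$ admits finite chains if for each $n\in\mathbb{N}$ there is at least one $n$-element finite chain that is a frame for $\mathsf{L}$. *)

(* Boolean algebras are mathcomp's ctbDistrLatticeType. *)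
From HB Require Import structures.
From mathcomp Require Import all_boot all_order.
Set Implicit Arguments. Unset Strict Implicit. Unset Printing Implicit Defensive.
Import Order.Theory.
Local Open Scope order_scope.

Inductive form : Type :=
| Var of nat
| Bot
| Imp of form & form
| Box of form.

Definition Neg (f : form) : form := Imp f Bot.
Definition Or (f g : form) : form := Imp (Neg f) g.
Definition And (f g : form) : form := Neg (Imp f (Neg g)).

Fixpoint subst (s : nat -> form) (f : form) : form :=
  match f with
  | Var i => s i
  | Bot => Bot
  | Imp f g => Imp (subst s f) (subst s g)
  | Box f => Box (subst s f)
  end.

(* Normal modal logic: contains all classical tautologies (via a complete
   Hilbert axiomatisation for ->, bot) and the K axiom, and is closed under
   modus ponens, necessitation and uniform substitution. *)
Record normal_logic (L : form -> Prop) : Prop := {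
  nl_A1 : forall p q, L (Imp p (Imp q p));
  nl_A2 : forall p q r, L (Imp (Imp p (Imp q r)) (Imp (Imp p q) (Imp p r)));
  nl_A3 : forall p, L (Imp (Neg (Neg p)) p);
  nl_K : forall p q, L (Imp (Box (Imp p q)) (Imp (Box p) (Box q)));
  nl_MP : forall p q, L p -> L (Imp p q) -> L q;
  nl_Nec : forall p, L p -> L (Box p);
  nl_US : forall s p, L p -> L (subst s p)
}.

Fixpoint kripke_sat (C : Type) (R : C -> C -> Prop) (V : nat -> C -> Prop)
  (w : C) (f : form) : Prop :=
  match f with
  | Var i => V i w
  | Bot => False
  | Imp f g => kripke_sat R V w f -> kripke_sat R V w g
  | Box f => forall u, R w u -> kripke_sat R V u f
  end.

Definition frame_for (L : form -> Prop) (C : Type) (R : C -> C -> Prop) : Prop :=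
  forall f, L f -> forall (V : nat -> C -> Prop) (w : C), kripke_sat R V w f.

Definition is_chain (C : finType) (R : rel C) : Prop :=
  let Rr := fun x y => (x == y) || R x y in
  (forall x y, Rr x y -> Rr y x -> x = y) /\
  (forall x y z, Rr x y -> Rr y z -> Rr x z) /\
  (forall x y, Rr x y || Rr y x).

Definition admits_finite_chains (L : form -> Prop) : Prop :=
  forall n : nat, exists (C : finType) (R : rel C),
    #|C| = n /\ is_chain R /\ frame_for L (fun x y => R x y).

Record modal_algebra d (B : ctbDistrLatticeType d) (box : B -> B) : Prop := {
  ma_top : box \top = \top;
  ma_meet : forall a b : B, box (a `&` b) = box a `&` box b
}.

Fixpoint alg_eval d (B : ctbDistrLatticeType d) (box : B -> B)
  (v : nat -> B) (f : form) : B :=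
  match f with
  | Var i => v i
  | Bot => \bot
  | Imp f g => (~` alg_eval box v f) `|` alg_eval box v g
  | Box f => box (alg_eval box v f)
  end.

Definition in_VL (L : form -> Prop) d (B : ctbDistrLatticeType d) (box : B -> B)
  : Prop :=
  modal_algebra box /\ forall f, L f -> forall v : nat -> B, alg_eval box v f = \top.

Definition tterm d (B : ctbDistrLatticeType d) (box : B -> B) (x y z : B) : B :=
  box (y `|` box (z `|` x)) `|` x.

Fixpoint titer d (B : ctbDistrLatticeType d) (box : B -> B) (k : nat) (x y z : B)
  : B :=
  match k with
  | 0 => x
  | k'.+1 => tterm box (titer box k' x y z) y z
  end.

From mathcomp Require Import all_boot all_order zify.
Import Order.DefaultSetSubsetOrder.
Set Implicit Arguments. Unset Strict Implicit.

(* Number the points of a finite chain 0 < 1 < ... < N-1, interpret y by the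
   even and z by the odd points, and start from x = ∅.  Upper segments
   {j, ..., N-1} are closed under successors, so if x contains the segment
   from j then t(x) contains the segment from j-1: t^k(∅) contains the last k
   points.  Conversely, if x lies in the segment from j then t(x) lies in the
   segment from j-3: a point w more than three steps below j sees an odd
   point o with o+1 < j, where y fails, so box(z ∨ x) holds at o and forces
   the even point o+1 into x.  With N = 3n+1 points, t^n(∅) misses the first
   point while t^(n+N)(∅) contains it, so t^n(∅) is not a fixed point. *)

Lemma titer_fixed_add d (B : ctbDistrLatticeType d) (box : B -> B) n k
    (x y z : B) :
  titer box n x y z = titer box n.+1 x y z ->
  titer box (n + k) x y z = titer box n x y z.
Proof.
move=> fixn; elim: k => [|k IHk]; first by rewrite addn0.
by rewrite addnS /= IHk; apply: esym.
Qed.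

Section ComplexAlgebra.
Variables (C : finType) (R : rel C).

Definition frame_box (A : {set C}) : {set C} :=
  [set w | [forall v, R w v ==> (v \in A)]].

Lemma frame_boxP (A : {set C}) w :
  reflect (forall v, R w v -> v \in A) (w \in frame_box A).
Proof.
rewrite inE; apply: (iffP forallP) => Aw v; first exact/implyP.
exact/implyP/Aw.
Qed.

Lemma modal_algebra_frame_box : modal_algebra frame_box.
Proof.
split=> [|A1 A2]; apply/setP => w.
  by rewrite [RHS]inE; apply/frame_boxP => v; rewrite inE.
change (w \in frame_box (A1 :&: A2) = (w \in frame_box A1 :&: frame_box A2)).
rewrite in_setI; apply/frame_boxP/andP.
  by move=> A12w; split; apply/frame_boxP => v /A12w;
    rewrite in_setI => /andP[].
case=> /frame_boxP A1w /frame_boxP A2w v Rwv.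
by rewrite in_setI A1w ?A2w.
Qed.

Lemma alg_eval_frame_box (V : nat -> {set C}) f w :
  w \in alg_eval frame_box V f <->
  kripke_sat (fun a b => R a b) (fun i a => a \in V i) w f.
Proof.
elim: f w => [i | | f IHf g IHg | f IHf] w //=.
- by rewrite in_set0.
- change (w \in (~: alg_eval frame_box V f) :|: alg_eval frame_box V g <->
    (kripke_sat (fun a b => R a b) (fun i a => a \in V i) w f ->
     kripke_sat (fun a b => R a b) (fun i a => a \in V i) w g)).
  rewrite in_setU in_setC -(rwP orP) -(rwP negP) IHg -IHf.
  by split=> [[nf|gw] //|fg]; case: (boolP (w \in _)) => [/fg|]; auto.
- split=> [/frame_boxP fw u /fw /IHf //|fw].
  by apply/frame_boxP => u /fw /IHf.
Qed.

Lemma in_VL_frame_box (L : form -> Prop) :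
  frame_for L (fun a b => R a b) -> in_VL L frame_box.
Proof.
move=> frameL; split=> [|f Lf V]; first exact: modal_algebra_frame_box.
apply/setP => w; rewrite [RHS]inE; apply/idP/alg_eval_frame_box; exact: frameL.
Qed.

End ComplexAlgebra.

Lemma odd_in_window a : exists2 o, odd o & a < o <= a + 2.
Proof. by exists (a.+1 + odd a); [rewrite oddD /=; case: (odd a) | lia]. Qed.

Section FiniteChain.
Variables (C : finType) (R : rel C).
Hypothesis chainR : is_chain R.

Let Rr x y := (x == y) || R x y.
Let chain_enum := sort Rr (enum C).

Lemma perm_chain_enum : perm_eq chain_enum (enum C).
Proof. by rewrite perm_sort. Qed.

Lemma mem_chain_enum w : w \in chain_enum.
Proof. by rewrite (perm_mem perm_chain_enum) mem_enum. Qed.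

Lemma size_chain_enum : size chain_enum = #|C|.
Proof. by rewrite (perm_size perm_chain_enum) cardE. Qed.

Definition pos (w : C) : nat := index w chain_enum.

Lemma pos_inj : injective pos.
Proof. by move=> w v; apply/(index_inj w); apply: mem_chain_enum. Qed.

Lemma pos_lt_card w : pos w < #|C|.
Proof. by rewrite -size_chain_enum index_mem mem_chain_enum. Qed.

Lemma pos_onto i : i < #|C| -> exists w, pos w = i.
Proof.
move=> ltiC; have /card_gt0P[w0 _] : 0 < #|C| by apply: leq_ltn_trans ltiC.
exists (nth w0 chain_enum i).
rewrite /pos index_uniq ?size_chain_enum //.
by rewrite (perm_uniq perm_chain_enum) enum_uniq.
Qed.

Lemma pos_lt_R w v : pos w < pos v -> R w v.
Proof.
case: chainR => _ [RrT RrC] ltwv.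
have Rr_trans : transitive Rr by move=> y x z; apply: RrT.
have Rr_total : total Rr by exact: RrC.
have := sorted_ltn_nth Rr_trans w (sort_sorted Rr_total (enum C)).
move/(_ (pos w) (pos v)); rewrite !inE size_chain_enum !pos_lt_card /pos.
rewrite !nth_index ?mem_chain_enum // => /(_ isT isT ltwv).
by rewrite /Rr; case: eqVneq ltwv => [-> | //]; rewrite ltnn.
Qed.

Lemma R_pos_lt w v : R w v -> w != v -> pos w < pos v.
Proof.
case: chainR => Rr_anti _ Rwv; apply: contraNT; rewrite -leqNgt leq_eqVlt.
case/orP=> [/eqP/pos_inj -> // | /pos_lt_R Rvw].
by apply/eqP/Rr_anti; rewrite ?Rwv ?Rvw orbT.
Qed.

Definition above j : {set C} := [set w | j <= pos w].

Definition evens : {set C} := [set w | ~~ odd (pos w)].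
Definition odds : {set C} := [set w | odd (pos w)].

Local Notation t X := (tterm (frame_box R) X evens odds).

Lemma above_succ_sub_frame_box (A : {set C}) w :
  w \in A -> above (pos w).+1 \subset A -> w \in frame_box R A.
Proof.
move=> Aw /subsetP sAA; apply/frame_boxP => v Rwv.
have [<- // | neq_wv] := eqVneq w v.
by apply/sAA; rewrite inE R_pos_lt.
Qed.

Lemma above_sub_frame_box j (A : {set C}) :
  above j \subset A -> above j \subset frame_box R A.
Proof.
move=> sjA; apply/subsetP => w jw; apply: above_succ_sub_frame_box.
  exact: subsetP jw.
by apply: subset_trans sjA; apply/subsetP => v; rewrite !inE in jw *; lia.
Qed.

Lemma above_pred_sub_t j (X : {set C}) :
  above j \subset X -> above j.-1 \subset t X.
Proof.
move=> sjX; apply/subsetP => w; rewrite inE => le_jw.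
have [jw | ltwj] := leqP j (pos w).
  by apply/setUP; right; apply/(subsetP sjX); rewrite inE.
have{le_jw ltwj} eq_j : j = (pos w).+1 by lia.
subst j.
have sjOX : above (pos w).+1 \subset odds :|: X.
  exact: subset_trans sjX (subsetUr _ _).
apply/setUP; left; apply: above_succ_sub_frame_box.
  rewrite in_setU inE; case: (boolP (odd _)) => //= odd_w.
  by apply: above_succ_sub_frame_box sjOX; rewrite in_setU inE odd_w.
exact: subset_trans (above_sub_frame_box sjOX) (subsetUr _ _).
Qed.

Lemma t_sub_above j (X : {set C}) :
  j <= #|C| -> X \subset above j -> t X \subset above (j - 3).
Proof.
move=> leJC sXj; apply/subsetP => w /setUP[tw | /(subsetP sXj)]; last first.
  by rewrite !inE; lia.
rewrite inE leqNgt; apply/negP => ltwj.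
have [o odd_o /andP[ltwo leo]] := odd_in_window (pos w).
have [v pos_v] : exists v, pos v = o by apply: pos_onto; lia.
have [u pos_u] : exists u, pos u = o.+1 by apply: pos_onto; lia.
have Rwv : R w v by apply: pos_lt_R; rewrite pos_v.
have Rvu : R v u by apply: pos_lt_R; rewrite pos_v pos_u.
move: (frame_boxP _ _ _ tw v Rwv); rewrite in_setU inE pos_v odd_o /=.
move=> /frame_boxP /(_ u Rvu); rewrite in_setU inE pos_u /= odd_o /=.
by move=> /(subsetP sXj); rewrite inE pos_u; lia.
Qed.

Lemma above_sub_titer k :
  above (#|C| - k) \subset titer (frame_box R) k set0 evens odds.
Proof.
elim: k => [|k IHk].
  by apply/subsetP => w; rewrite inE subn0 leqNgt pos_lt_card.
by rewrite subnS; apply: above_pred_sub_t.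
Qed.

Lemma titer_sub_above k :
  titer (frame_box R) k set0 evens odds \subset above (#|C| - 3 * k).
Proof.
elim: k => [|k IHk]; first exact: sub0set.
by rewrite mulnS addnC subnDA; apply: t_sub_above; rewrite ?leq_subr.
Qed.

End FiniteChain.

Theorem lemma4p2 (L : form -> Prop) (HL : normal_logic L)
  (Hch : admits_finite_chains L) (n : nat) :
  ~ (forall (d : Order.disp_t) (B : ctbDistrLatticeType d) (box : B -> B),
       in_VL L box ->
       forall x y z : B, titer box n x y z = titer box n.+1 x y z).
Proof.
move=> stable.
have [C [R [cardC [chainR frameL]]]] := Hch (3 * n).+1.
have fixn := stable _ _ _ (in_VL_frame_box frameL) set0 (evens R) (odds R).
have [w0 pos_w0] : exists w0, pos R w0 = 0 by apply: pos_onto; rewrite cardC.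
have : w0 \in titer (frame_box R) (n + #|C|) set0 (evens R) (odds R).
  apply/(subsetP (above_sub_titer chainR _)).
  by rewrite inE pos_w0 leqn0 subn_eq0 leq_addl.
rewrite titer_fixed_add // => /(subsetP (titer_sub_above chainR n)).
by rewrite inE pos_w0 cardC subSn // subnn.
Qed.
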